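(* Let $d,k\ge 0$ be integers. Then: (1) $f(k,d)\ge \frac{(k+1)(d+2t)}{(d+k+t+1)(d+t)}\ge \frac{k+1}{d+k+1}$, where $t$ is the unique integer with $1\le t\le k+1$ and $d\equiv k+1-t \pmod{k+1}$. (2) If $k\ge d$, then $f(k,d)\ge \frac{2k+2-d}{2k+2}$. Moreover, for $k\ge 1$, $f(k,1)=\frac{2k+1}{2k+2}$, attained by the graph $K_{1,k+1}\cup kK_1$ (a star with $k+1$ leaves together with $k$ isolated vertices). (3) For every finite simple graph $G$ on $n\ge 1$ vertices, $\alpha_k(G)\ge \frac{k+1}{\lceil d(G)\rceil+k+1}\,n$.
   Context: For a graph $G=(V,E)$ and an integer $k\ge 0$, a $k$-independent set is a set $S\subseteq V$ such that the induced subgraph $G[S]$ has maximum degree at most $k$; $\alpha_k(G)$ denotes the maximum cardinality of a $k$-independent set of $G$. $n(G)$ is the number of vertices and $d(G)=2|E(G)|/n(G)$ the average degree. For integers $d,k\ge 0$, $f(k,d)=\inf\left\{\frac{\alpha_k(G)}{n(G)} : G \text{ a finite simple graph with at least one vertex and } d(G)\le d\right\}$. *)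

From HB Require Import structures.
From mathcomp Require Import all_boot all_order all_algebra.
Set Implicit Arguments. Unset Strict Implicit. Unset Printing Implicit Defensive.
Import Order.TTheory GRing.Theory Num.Theory.

Definition simple_graph (T : finType) (e : rel T) : Prop :=
  symmetric e /\ irreflexive e.

Definition edges (T : finType) (e : rel T) : {set {set T}} :=
  [set [set p.1; p.2] | p in [set q : T * T | e q.1 q.2]].

Definition avgdeg (T : finType) (e : rel T) : rat :=
  ((2 * #|edges e|)%:R / #|T|%:R)%R.

Definition kindep (T : finType) (e : rel T) (k : nat) (S : {set T}) : bool :=
  [forall x in S, #|[set y in S | e x y]| <= k].

Definition alpha_k (T : finType) (e : rel T) (k : nat) : nat :=
  \max_(S : {set T} | kindep e k S) #|S|.

(* "f(k,d) >= c": c is a lower bound for alpha_k(G)/n(G) over all finite simple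
   graphs G with at least one vertex and d(G) <= d. *)
Definition f_ge (k d : nat) (c : rat) : Prop :=
  forall (T : finType) (e : rel T), simple_graph e -> (0 < #|T|)%N ->
    (avgdeg e <= d%:R)%R -> (c <= (alpha_k e k)%:R / #|T|%:R)%R.

(* The graph K_{1,k+1} U k K_1 on vertex set 'I_(2k+2): vertex 0 is the centre,
   vertices 1..k+1 are its leaves, vertices k+2..2k+1 are isolated. *)
Definition star_iso (k : nat) : rel 'I_(k.*2.+2) :=
  fun x y => ((val x == 0%N) && (1 <= val y <= k.+1)%N)
          || ((val y == 0%N) && (1 <= val x <= k.+1)%N).
Arguments star_iso k : clear implicits.

(* The heart of the proof is a counting bound (bounded_by_all): for every
   q >= 0 and every vertex set U of a simple graph there is a k-independent
   set S with
        2(k+1)(q+1)|U| <= (k+1)(q+1)(q+2)|S| + degsum U,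
   where degsum U is the sum of the degrees inside G[U].  It is proved by
   induction on q and |U|: a vertex of degree >= (q+1)(k+1) is deleted; if all
   degrees are smaller and degsum U >= q(k+1)|U|, a colouring of U with q+1
   colours minimising the number of monochromatic edges has k-independent
   colour classes (large_kindep_class); otherwise the bound for q-1 suffices.
   Taking U = V(G) and degsum V(G) = 2|E(G)| <= d n gives f(k,d) >=
   (2(k+1)(q+1) - d) / ((k+1)(q+1)(q+2)) (f_ge_counting).  The choice
   q = 0 gives part (2), the choice q + 1 = (d+t)/(k+1) gives part (1), and
   part (3) is part (1) for d = ceil(d(G)). *)

From HB Require Import structures.
From mathcomp Require Import all_boot all_order all_algebra.
From mathcomp Require Import zify.
Import Order.TTheory GRing.Theory Num.Theory.
Set Implicit Arguments. Unset Strict Implicit. Unset Printing Implicit Defensive.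

Lemma sum_indicator (T : finType) (A : {pred T}) (b : pred T) :
  \sum_(x in A) (b x : nat) = #|[set x in A | b x]|.
Proof.
rewrite -sum1_card big_mkcond /= [RHS]big_mkcond /=.
by apply: eq_bigr => x _; rewrite !inE; case: (x \in A); case: (b x).
Qed.

Lemma set2_eq_pair (T : finType) (x y a b : T) :
  [set x; y] = [set a; b] -> ((x, y) == (a, b)) || ((x, y) == (b, a)).
Proof.
move=> E.
have hx : x \in [set a; b] by rewrite -E !inE eqxx.
have hy : y \in [set a; b] by rewrite -E !inE eqxx orbT.
have ha : a \in [set x; y] by rewrite E !inE eqxx.
have hb : b \in [set x; y] by rewrite E !inE eqxx orbT.
move: hx hy ha hb; rewrite !inE.
case/orP=> /eqP ->; case/orP=> /eqP ->; rewrite ?eqxx ?orbT //= ?orbb.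
  by move=> _ /eqP ->; rewrite eqxx.
by move=> /eqP -> _; rewrite eqxx.
Qed.

Lemma averaging_low p (F : 'I_p.+1 -> nat) :
  exists j, p.+1 * F j <= \sum_i F i.
Proof.
have [/existsP [j Hj]|/existsPn H] := boolP [exists j, p.+1 * F j <= \sum_i F i].
  by exists j.
have : \sum_(j : 'I_p.+1) (\sum_i F i).+1 <= \sum_j p.+1 * F j.
  by apply: leq_sum => j _; rewrite ltnNge H.
rewrite sum_nat_const card_ord -big_distrr /=; lia.
Qed.

Lemma averaging_high p (F : 'I_p.+1 -> nat) :
  exists j, \sum_i F i <= p.+1 * F j.
Proof.
have [/existsP [j Hj]|/existsPn H] := boolP [exists j, \sum_i F i <= p.+1 * F j].
  by exists j.
have : \sum_j (p.+1 * F j + 1) <= \sum_(j : 'I_p.+1) \sum_i F i.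
  by apply: leq_sum => j _; rewrite addn1 ltnNge H.
rewrite sum_nat_const card_ord big_split /= -big_distrr /= sum_nat_const card_ord.
lia.
Qed.

Section DegreeSums.
Variables (T : finType) (e : rel T).

Definition nbhd (U : {set T}) (x : T) : {set T} := [set y in U | e x y].

Definition degsum (U : {set T}) : nat := \sum_(x in U) #|nbhd U x|.

(* Deleting v from U removes the edges of G[U] at v, each counted twice. *)
Lemma degsum_delete (U : {set T}) (v : T) :
  simple_graph e -> v \in U -> degsum U = degsum (U :\ v) + 2 * #|nbhd U v|.
Proof.
move=> [sym irr] vU; rewrite /degsum (bigD1 v) //=.
have -> : \sum_(x in U | x != v) #|nbhd U x|
        = \sum_(x in U :\ v) (#|nbhd (U :\ v) x| + e x v).
  rewrite [RHS](eq_bigl (fun x => (x \in U) && (x != v))); last first.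
    by move=> x; rewrite !inE andbC.
  apply: eq_bigr => x /andP [xU xv].
  rewrite (cardsD1 v) addnC; congr (_ + _); last by rewrite !inE vU.
  by apply: eq_card => y; rewrite !inE andbA.
rewrite big_split /= sum_indicator.
have -> : [set x in U :\ v | e x v] = nbhd U v.
  apply/setP => y; rewrite !inE sym; case E: (e v y); rewrite ?andbF // ?andbT.
  by case: eqP => // yv; rewrite yv irr in E.
lia.
Qed.

Lemma degsum_setT : degsum setT <= 2 * #|edges e|.
Proof.
pose P := [set q : T * T | e q.1 q.2].
have -> : degsum setT = #|P|.
  have -> : degsum setT = \sum_x \sum_y (e x y : nat).
    apply: eq_big => [x|x _]; first by rewrite inE.
    by rewrite sum_indicator; apply: eq_card => y; rewrite !inE.
  by rewrite pair_big /= sum_indicator; apply: eq_card => q; rewrite !inE.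
rewrite -sum1_card (partition_big_imset (fun q => [set q.1; q.2])) /=.
rewrite /edges mulnC -sum_nat_const.
apply: leq_sum => E /imsetP [q0 q0P ->]; rewrite sum1_card.
apply: (@leq_trans #|[set (q0.1, q0.2); (q0.2, q0.1)]|); last first.
  by rewrite cards2; case: (_ != _).
apply: subset_leq_card; apply/subsetP => q; rewrite !inE => /andP [_ /eqP Hq].
by have := set2_eq_pair Hq; case: q {Hq}.
Qed.

End DegreeSums.

Lemma card_colour_classes (T : finType) (A : {set T}) p (f : T -> 'I_p) :
  \sum_(j : 'I_p) #|[set y in A | f y == j]| = #|A|.
Proof.
rewrite -sum1_card (partition_big f xpredT) //=.
by apply: eq_bigr => j _; rewrite -sum1_card; apply: eq_bigl => y; rewrite !inE.
Qed.

Section Colourings.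
Variables (T : finType) (e : rel T) (p : nat).
Hypothesis sg : simple_graph e.

Definition mono_deg (U : {set T}) (f : {ffun T -> 'I_p.+1}) (x : T) : nat :=
  #|[set y in U | e x y && (f y == f x)]|.

Definition mono_sum (U : {set T}) (f : {ffun T -> 'I_p.+1}) : nat :=
  \sum_(x in U) mono_deg U f x.

Lemma mono_sum_delete (U : {set T}) (f : {ffun T -> 'I_p.+1}) (x : T) :
  x \in U -> mono_sum U f = 2 * mono_deg U f x + mono_sum (U :\ x) f.
Proof.
case: sg => sym irr xU; rewrite /mono_sum (bigD1 x) //=.
have -> : \sum_(z in U | z != x) mono_deg U f z
        = \sum_(z in U :\ x) (mono_deg (U :\ x) f z + (e z x && (f x == f z))).
  rewrite [RHS](eq_bigl (fun z => (z \in U) && (z != x))); last first.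
    by move=> z; rewrite !inE andbC.
  apply: eq_bigr => z /andP [zU zx].
  rewrite /mono_deg (cardsD1 x) addnC; congr (_ + _); last by rewrite !inE xU.
  by apply: eq_card => y; rewrite !inE andbA.
rewrite big_split /= sum_indicator.
have -> : [set z in U :\ x | e z x && (f x == f z)] =
          [set y in U | e x y && (f y == f x)].
  apply/setP => y; rewrite !inE sym eq_sym; case E: (e x y); rewrite ?andbF //=.
  by rewrite [f y == _]eq_sym; case: eqP => [yx|] //=; rewrite yx irr in E.
rewrite /mono_deg; lia.
Qed.

Lemma eq_mono_sum (U : {set T}) (f g : {ffun T -> 'I_p.+1}) :
  {in U, f =1 g} -> mono_sum U f = mono_sum U g.
Proof.
move=> fg; apply: eq_bigr => x xU; rewrite /mono_deg fg //.
by apply: eq_card => y; rewrite !inE; case yU: (y \in U); rewrite //= fg.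
Qed.

(* In a colouring minimising mono_sum, each x has at most deg(x)/(p+1)
   neighbours of its own colour: otherwise recolouring x with its least
   frequent colour among its neighbours would decrease mono_sum. *)
Lemma optimal_colouring_sparse (U : {set T}) (f : {ffun T -> 'I_p.+1}) :
  (forall g, mono_sum U f <= mono_sum U g) ->
  forall x, x \in U -> p.+1 * mono_deg U f x <= #|nbhd e U x|.
Proof.
move=> fmin x xU; rewrite leqNgt; apply/negP => Hlt.
pose F j := #|[set y in nbhd e U x | f y == j]|.
have [j Hj] := averaging_low F.
rewrite /F card_colour_classes -/(F j) in Hj.
pose g := [ffun z => if z == x then j else f z].
have gx : mono_deg U g x = F j.
  apply: eq_card => y; rewrite !inE !ffunE eqxx.
  case: (eqVneq y x) => [->|yx]; last by rewrite andbA.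
  by case: sg => _ irr; rewrite irr !andbF.
have gf : mono_sum (U :\ x) g = mono_sum (U :\ x) f.
  by apply: eq_mono_sum => z; rewrite !inE ffunE => /andP [/negbTE -> _].
have := fmin g; rewrite (mono_sum_delete f xU) (mono_sum_delete g xU) gx gf.
have : F j < mono_deg U f x.
  by rewrite -(ltn_pmul2l (ltn0Sn p)); apply: leq_ltn_trans Hlt.
lia.
Qed.

(* If every degree in G[U] is below (p+1)(k+1), the colour classes of an
   optimal colouring with p+1 colours are k-independent, and the largest one
   has at least |U|/(p+1) vertices. *)
Lemma large_kindep_class (U : {set T}) (k : nat) :
  (forall x, x \in U -> #|nbhd e U x| < p.+1 * k.+1) ->
  exists S, kindep e k S /\ #|U| <= p.+1 * #|S|.
Proof.
move=> Hdeg.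
have [f _ fmin] := @arg_minnP _ [ffun _ => ord0] xpredT (mono_sum U) isT.
have [j Hj] := averaging_high (fun j => #|[set y in U | f y == j]|).
rewrite card_colour_classes in Hj.
exists [set y in U | f y == j]; split => //.
apply/forallP => x; apply/implyP; rewrite inE => /andP [xU /eqP fx].
have -> : #|[set y in [set y0 in U | f y0 == j] | e x y]| = mono_deg U f x.
  apply: eq_card => y; rewrite !inE fx.
  by case: (y \in U); case: (f y == j); case: (e x y).
have := optimal_colouring_sparse (fun g => fmin g isT) xU; have := Hdeg x xU.
nia.
Qed.

End Colourings.

Section CountingBound.
Variables (T : finType) (e : rel T) (k : nat).
Hypothesis sg : simple_graph e.

Definition bounded_by (q : nat) (U : {set T}) : Prop :=
  exists S, kindep e k S /\
    2 * k.+1 * q.+1 * #|U| <= k.+1 * q.+1 * q.+2 * #|S| + degsum e U.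

Lemma bounded_by_delete q (U : {set T}) (v : T) :
  v \in U -> q.+1 * k.+1 <= #|nbhd e U v| -> bounded_by q (U :\ v) -> bounded_by q U.
Proof.
move=> vU Hv [S [HS Hb]]; exists S; split => //.
rewrite (degsum_delete sg vU) (cardsD1 v U) vU add1n mulnS.
move: Hb Hv; set N := #|U :\ v|; set D := degsum e (U :\ v); nia.
Qed.

Lemma bounded_by_colouring q (U : {set T}) :
  (forall x, x \in U -> #|nbhd e U x| < q.+1 * k.+1) ->
  q * k.+1 * #|U| <= degsum e U -> bounded_by q U.
Proof.
move=> Hdeg HD; have [S [HS HSc]] := large_kindep_class sg Hdeg.
exists S; split => //.
have := leq_mul (leqnn (k.+1 * q.+2)) HSc.
move: HD; set N := #|U|; set s := #|S|; set D := degsum e U; nia.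
Qed.

Lemma bounded_by_pred q (U : {set T}) :
  degsum e U < q * k.+1 * #|U| -> bounded_by q.-1 U -> bounded_by q U.
Proof.
case: q => [|q] /= HD [S [HS Hb]]; first by rewrite mul0n mul0n in HD.
exists S; split => //.
have H3 := leq_mul (leqnn q.+3) Hb.
rewrite -(leq_pmul2l (ltn0Sn q)).
move: HD H3; set N := #|U|; set s := #|S|; set D := degsum e U; nia.
Qed.

Lemma bounded_by_step q :
  (0 < q -> forall U, bounded_by q.-1 U) -> forall U, bounded_by q U.
Proof.
move=> IHq U; have [n] := ubnP #|U|; elim: n U => // n IHn U /ltnSE HU.
have [/existsP [v /andP [vU Hv]]|/existsPn Hlow] :=
  boolP [exists v in U, q.+1 * k.+1 <= #|nbhd e U v|].
  apply: (bounded_by_delete vU Hv); apply: IHn.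
  by move: HU; rewrite (cardsD1 v U) vU.
have Hdeg : forall x, x \in U -> #|nbhd e U x| < q.+1 * k.+1.
  by move=> x xU; move: (Hlow x); rewrite xU ltnNge.
have [HD|HD] := leqP (q * k.+1 * #|U|) (degsum e U).
  exact: bounded_by_colouring.
apply: (bounded_by_pred HD (IHq _ U)).
by move: HD; case: (q).
Qed.

Lemma bounded_by_all q (U : {set T}) : bounded_by q U.
Proof. by elim: q U => [|q IHq]; apply: bounded_by_step. Qed.

End CountingBound.

Lemma kindep_le_alpha (T : finType) (e : rel T) k (S : {set T}) :
  kindep e k S -> #|S| <= alpha_k e k.
Proof. exact: (@leq_bigmax_cond _ (kindep e k) (fun S => #|S|) S). Qed.

Section LowerBounds.
Local Open Scope ring_scope.

(* The counting bound for U = V(G), with degsum V(G) <= 2|E(G)| <= d n. *)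
Lemma f_ge_counting k d q a b :
  (a + d = 2 * k.+1 * q.+1)%N -> b = (k.+1 * q.+1 * q.+2)%N ->
  f_ge k d (a%:R / b%:R).
Proof.
move=> Ha Hb T e sg n0 Hav.
have [S [HS HB]] := bounded_by_all k sg q setT.
have HSa := kindep_le_alpha HS.
have Hdeg := degsum_setT e.
have b0 : (0 : rat) < b%:R by rewrite Hb ltr0n muln_gt0.
have N0 : (0 : rat) < #|T|%:R by rewrite ltr0n.
move: Hav; rewrite /avgdeg ler_pdivrMr // -natrM ler_nat => Hav.
rewrite cardsT in HB.
rewrite ler_pdivlMr // mulrAC ler_pdivrMr // -!natrM ler_nat.
move: HSa HB Hdeg Hav; rewrite -Hb.
set N := #|T|; set s := #|S|; set al := alpha_k e k; set D := degsum e setT.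
set E := #|edges e|; nia.
Qed.

Lemma f_ge_small_degree k d :
  (d <= k.*2.+2)%N -> f_ge k d ((k.*2.+2 - d)%:R / (k.*2.+2)%:R).
Proof. by move=> dk; apply: (@f_ge_counting k d 0); lia. Qed.

Lemma residue_multiple d k t :
  (1 <= t <= k.+1)%N -> d = (k.+1 - t)%N %[mod k.+1] ->
  exists2 r, (0 < r)%N & (d + t = r * k.+1)%N.
Proof.
move=> /andP [t1 tk] Hm.
have Hmod : ((d + t) %% k.+1 = 0)%N.
  by rewrite -modnDml Hm modnDml subnK // modnn.
exists ((d + t) %/ k.+1)%N; last by rewrite {1}(divn_eq (d + t) k.+1) Hmod addn0.
by rewrite divn_gt0 //; apply: dvdn_leq; [lia | rewrite /dvdn Hmod].
Qed.

Lemma f_ge_residue d k t :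
  (1 <= t <= k.+1)%N -> d = (k.+1 - t)%N %[mod k.+1] ->
  f_ge k d ((k.+1 * (d + 2 * t))%:R / ((d + k + t + 1) * (d + t))%:R).
Proof.
move=> Ht Hm; have [r r0 Hr] := residue_multiple Ht Hm.
have Hf := @f_ge_counting k d r.-1 (d + 2 * t) (k.+1 * r * r.+1).
rewrite prednK // in Hf; have {}Hf := Hf ltac:(lia) erefl.
suff -> : (k.+1 * (d + 2 * t))%:R / ((d + k + t + 1) * (d + t))%:R
        = (d + 2 * t)%:R / (k.+1 * r * r.+1)%:R :> rat by [].
have Hr1 : (d + k + t + 1 = r.+1 * k.+1)%N by rewrite mulSn; lia.
apply/eqP; rewrite eqr_div ?pnatr_eq0 -?natrM ?eqr_nat ?Hr1 ?Hr -?lt0n ?muln_gt0 ?r0 //.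
by apply/eqP; lia.
Qed.

(* The bound of part (1) dominates (k+1)/(d+k+1); cross-multiplied, this is
   t(d+t) <= t(d+k+1). *)
Lemma residue_bound_ge d k t : (1 <= t <= k.+1)%N ->
  (k.+1)%:R / (d + k + 1)%:R
    <= (k.+1 * (d + 2 * t))%:R / ((d + k + t + 1) * (d + t))%:R :> rat.
Proof.
move=> Ht.
rewrite ler_pdivrMr ?ltr0n ?muln_gt0; last lia.
rewrite mulrAC ler_pdivlMr ?ltr0n; last lia.
rewrite -!natrM ler_nat -mulnA leq_pmul2l //.
have : (t * (d + t) <= t * (d + k + 1))%N by apply: leq_mul => //; lia.
nia.
Qed.

Lemma alpha_k_ceil_bound k (T : finType) (e : rel T) :
  simple_graph e -> (0 < #|T|)%N ->
  (k.+1)%:R / ((Num.ceil (avgdeg e))%:~R + (k.+1)%:R) * #|T|%:R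
    <= (alpha_k e k)%:R :> rat.
Proof.
move=> sg n0.
have [D HD] : exists D : nat, Num.ceil (avgdeg e) = D%:Z.
  exists `|Num.ceil (avgdeg e)|%N; rewrite gez0_abs // ceil_ge0.
  by apply: lt_le_trans (divr_ge0 (ler0n _ _) (ler0n _ _)); rewrite ltrN10.
have Hav : avgdeg e <= D%:R by have := ceil_ge (avgdeg e); rewrite HD.
pose t := (k.+1 - D %% k.+1)%N.
have Ht : (1 <= t <= k.+1)%N by have := ltn_pmod D (ltn0Sn k); lia.
have Hm : D = (k.+1 - t)%N %[mod k.+1].
  by rewrite /t subKn ?modn_mod // ltnW // ltn_pmod.
have Hf := f_ge_residue Ht Hm sg n0 Hav.
have Hcmp := residue_bound_ge D Ht.
have N0 : (0 : rat) < #|T|%:R by rewrite ltr0n.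
rewrite HD -ler_pdivlMr // -natrD.
by apply: le_trans Hf; move: Hcmp; rewrite -addnA addn1.
Qed.

End LowerBounds.

Section StarExample.
Variable k : nat.

Lemma star_simple : simple_graph (star_iso k).
Proof.
split; first by move=> x y; rewrite /star_iso orbC.
by move=> x; rewrite /star_iso orbb; case: eqP => [->|].
Qed.

Definition leaf (i : 'I_k.+1) : 'I_(k.*2.+2) := inord i.+1.

Lemma leaf_val (i : 'I_k.+1) : val (leaf i) = i.+1.
Proof. by rewrite /leaf /= inordK //; have := ltn_ord i; lia. Qed.

Lemma leaf_inj : injective leaf.
Proof. by move=> i j /(congr1 val); rewrite !leaf_val => -[] /val_inj. Qed.

(* Every edge joins the centre to a leaf. *)
Lemma star_edges : #|edges (star_iso k)| <= k.+1.
Proof.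
apply: (@leq_trans #|[set [set ord0; leaf i] | i : 'I_k.+1]|); last first.
  by rewrite -[X in _ <= X](card_ord k.+1) leq_imset_card.
apply: subset_leq_card; apply/subsetP => E /imsetP [[x y] /=].
rewrite inE /star_iso /= => /orP [] /andP [/eqP x0 /andP [y1 y2]] ->.
  have y' : y.-1 < k.+1 by lia.
  apply/imsetP; exists (Ordinal y') => //.
  by congr [set _; _]; apply: val_inj; rewrite //= leaf_val /=; lia.
have x' : x.-1 < k.+1 by lia.
apply/imsetP; exists (Ordinal x') => //.
by rewrite setUC; congr [set _; _]; apply: val_inj; rewrite //= leaf_val /=; lia.
Qed.

Lemma star_avgdeg : (avgdeg (star_iso k) <= 1)%R.
Proof.
rewrite /avgdeg ler_pdivrMr ?ltr0n ?card_ord // mul1r ler_nat.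
by have := star_edges; lia.
Qed.

(* The centre has the k+1 leaves as neighbours, so V(G) is not k-independent. *)
Lemma star_not_kindep_setT : ~~ kindep (star_iso k) k setT.
Proof.
apply/forallP => /(_ ord0); rewrite inE /= leqNgt => /negP; apply.
rewrite -{1}(card_ord k.+1) -(card_imset _ leaf_inj).
apply: subset_leq_card; apply/subsetP => y /imsetP [i _ ->].
by rewrite !inE /star_iso /= leaf_val; have := ltn_ord i; lia.
Qed.

(* Without the centre there are no edges left. *)
Lemma star_kindep_noncentre : kindep (star_iso k) k [set~ ord0].
Proof.
apply/forallP => x; apply/implyP; rewrite !inE => x0.
rewrite (_ : [set y in [set~ ord0] | star_iso k x y] = set0) ?cards0 //.
apply/setP => y; rewrite !inE /star_iso.
have nz (z : 'I_(k.*2.+2)) : z != ord0 -> (val z == 0) = false.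
  by move=> z0; apply/negbTE; apply: contra z0 => /eqP z0; apply/eqP/val_inj.
by case: (eqVneq y ord0) => [//|y0]; rewrite /= !nz.
Qed.

Lemma star_alpha : alpha_k (star_iso k) k = k.*2.+1.
Proof.
apply/eqP; rewrite eqn_leq; apply/andP; split.
  apply/bigmax_leqP => S HS; rewrite leqNgt.
  apply: contra star_not_kindep_setT => HSc.
  suff <- : S = setT by [].
  by apply/eqP; rewrite eqEcard subsetT cardsT card_ord.
by move: (kindep_le_alpha star_kindep_noncentre); rewrite cardsC1 card_ord.
Qed.

End StarExample.

Unset Implicit Arguments.
Local Open Scope ring_scope.

Theorem mainTheorem7 (d k : nat) :
  (* (1) *)
  (forall t : nat, (1 <= t <= k.+1)%N -> d = (k.+1 - t)%N %[mod k.+1] ->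
     f_ge k d ((k.+1 * (d + 2 * t))%:R / ((d + k + t + 1) * (d + t))%:R)
     /\ (k.+1)%:R / (d + k + 1)%:R
          <= (k.+1 * (d + 2 * t))%:R / ((d + k + t + 1) * (d + t))%:R :> rat)
  (* (2) *)
  /\ ((d <= k)%N -> f_ge k d ((k.*2.+2 - d)%:R / (k.*2.+2)%:R))
  /\ ((1 <= k)%N ->
        f_ge k 1 ((k.*2.+1)%:R / (k.*2.+2)%:R)
        /\ simple_graph (star_iso k)
        /\ avgdeg (star_iso k) <= 1
        /\ (alpha_k (star_iso k) k)%:R / #|'I_(k.*2.+2)|%:R
             = (k.*2.+1)%:R / (k.*2.+2)%:R :> rat)
  (* (3) *)
  /\ (forall (T : finType) (e : rel T), simple_graph e -> (0 < #|T|)%N ->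
        (k.+1)%:R / ((Num.ceil (avgdeg e))%:~R + (k.+1)%:R) * #|T|%:R
          <= (alpha_k e k)%:R :> rat).
Proof.
split; first by move=> t Ht Hm; split; [exact: f_ge_residue | exact: residue_bound_ge].
split; first by move=> dk; apply: f_ge_small_degree; lia.
split; last exact: alpha_k_ceil_bound.
move=> k1; split; first by have := @f_ge_small_degree k 1; rewrite subn1; apply; lia.
split; first exact: star_simple.
split; first exact: star_avgdeg.
by rewrite star_alpha card_ord.
Qed.
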